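(* Let $K$ and $S$ be compact Hausdorff spaces and let $T\colon C(K)\to C(S)$ be a U-embedding. Let $F_T\colon S\to C(K)^*$ be $F_T(s)=T^*(\delta_s)$ and let $A_0:=F_T^{-1}(\{\pm\delta_k: k\in K\})\subset S$ (a homeomorphic copy of $K$ inside $S$). Then $A_0$ is a zero-set of $S$, and hence a $G_\delta$-subset of $S$.
   Context: $C(K)$, $C(S)$ carry the sup norm; $C(K)^*$ is identified with regular Borel signed measures, $\delta_k$ the Dirac measure at $k$; $\{\pm\delta_k:k\in K\}$ is the set of extreme points of the unit ball of $C(K)^*$, so $A_0$ is the U-core of $T$. A linear isometry $T\colon X\to Y$ is a U-embedding if every $x^*\in X^*$ has a unique $y^*\in Y^*$ with $T^*(y^* )=x^*$ and $\|y^*\|=\|x^*\|$. A zero-set of $S$ is a set of the form $\{t\in S:f(t)=0\}$ with $f\in C(S)$. *)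

From HB Require Import structures.
From mathcomp Require Import all_boot all_order all_algebra.
From mathcomp Require Import all_classical all_reals all_analysis.
Set Implicit Arguments. Unset Strict Implicit. Unset Printing Implicit Defensive.
Import Order.TTheory GRing.Theory Num.Theory numFieldNormedType.Exports.
Local Open Scope classical_set_scope.
Local Open Scope ring_scope.

Section CK.
Variable R : realType.
Variable K : topologicalType.

Definition Cfun : set (K -> R) := [set f : K -> R | continuous f].

Definition supnorm (f : K -> R) : R := sup [set `|f x| | x in [set: K]].

(* linear functional on C(K) (values outside C(K) are irrelevant) *)
Definition lin_on_C (phi : (K -> R) -> R) : Prop :=
  forall (a : R) (f g : K -> R), Cfun f -> Cfun g ->
    phi (fun x => a * f x + g x) = a * phi f + phi g.

Definition dual_elt (phi : (K -> R) -> R) : Prop :=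
  lin_on_C phi /\
  exists c : R, forall f, Cfun f -> `|phi f| <= c * supnorm f.

Definition dualnorm (phi : (K -> R) -> R) : R :=
  sup [set `|phi f| | f in [set f | Cfun f /\ supnorm f <= 1]].

(* equality of functionals as elements of C(K)^* *)
Definition eq_on_C (phi psi : (K -> R) -> R) : Prop :=
  forall f, Cfun f -> phi f = psi f.

Definition dirac_fun (k : K) : (K -> R) -> R := fun f => f k.
End CK.

Section Emb.
Variable R : realType.
Variables K S : topologicalType.

Definition lin_isometry (T : (K -> R) -> (S -> R)) : Prop :=
  (forall f, Cfun f -> Cfun (T f)) /\
  (forall (a : R) (f g : K -> R), Cfun f -> Cfun g ->
      T (fun x => a * f x + g x) = (fun s => a * T f s + T g s)) /\
  (forall f, Cfun f -> supnorm (T f) = supnorm f).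

Definition adjoint (T : (K -> R) -> (S -> R)) (y : (S -> R) -> R) : (K -> R) -> R :=
  fun f => y (T f).

Definition U_embedding (T : (K -> R) -> (S -> R)) : Prop :=
  lin_isometry T /\
  forall x : (K -> R) -> R, dual_elt x ->
    exists y : (S -> R) -> R,
      [/\ dual_elt y, eq_on_C (adjoint T y) x, dualnorm y = dualnorm x &
        forall y' : (S -> R) -> R, dual_elt y' ->
          eq_on_C (adjoint T y') x -> dualnorm y' = dualnorm x -> eq_on_C y' y].

Definition F_T (T : (K -> R) -> (S -> R)) (s : S) : (K -> R) -> R :=
  adjoint T (@dirac_fun R _ s).

Definition A0 (T : (K -> R) -> (S -> R)) : set S :=
  [set s | exists k : K,
     eq_on_C (F_T T s) (@dirac_fun R _ k) \/
     eq_on_C (F_T T s) (fun f => - @dirac_fun R _ k f)].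
End Emb.

Definition zero_set (R : realType) (S : topologicalType) (A : set S) : Prop :=
  exists g : S -> R, continuous g /\ A = [set s | g s = 0].

Definition G_delta (S : topologicalType) (A : set S) : Prop :=
  exists U : nat -> set S, (forall n, open (U n)) /\ A = \bigcap_n U n.

(* A0 is the zero set of 1 - |T 1|.  If F_T(s) = ±δ_k then T 1 (s) = ±1.  Conversely, if
   |T 1 (s)| = 1 then μ = F_T(s) has norm one and δ_s is its unique norm-preserving
   extension to C(S).  For 0 <= h <= 1 the norm-preserving extensions of hμ and (1-h)μ add
   up to a norm-one extension of μ, hence to δ_s; since δ_s is an extreme point of the dual
   ball, both summands are multiples of δ_s, so hμ is a multiple of μ.  Every h ∈ C(K) is
   an affine image of such a function, so μ(1)μ is a unital multiplicative functional on
   C(K), i.e. a point evaluation δ_k by compactness, and F_T(s) = ±δ_k. *)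

From HB Require Import structures.
From mathcomp Require Import all_boot all_order all_algebra.
From mathcomp Require Import all_classical all_reals all_analysis.
From mathcomp Require Import ring lra.
Set Implicit Arguments. Unset Strict Implicit. Unset Printing Implicit Defensive.
Import Order.TTheory GRing.Theory Num.Theory numFieldNormedType.Exports.
Local Open Scope classical_set_scope.
Local Open Scope ring_scope.

Section ContinuousFunctions.
Variables (R : realType) (X : topologicalType).
Implicit Types f g : X -> R.

Lemma Cfun_cst (c : R) : Cfun (fun _ : X => c).
Proof. by move=> x; apply: cvg_cst. Qed.

Lemma Cfun_add f g : Cfun f -> Cfun g -> Cfun (fun x => f x + g x).
Proof. move=> cf cg x; exact: (@continuousD R R^o X f g x (cf x) (cg x)). Qed.

Lemma Cfun_sub f g : Cfun f -> Cfun g -> Cfun (fun x => f x - g x).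
Proof. move=> cf cg x; exact: (@continuousB R R^o X f g x (cf x) (cg x)). Qed.

Lemma Cfun_mul f g : Cfun f -> Cfun g -> Cfun (fun x => f x * g x).
Proof. move=> cf cg x; exact: (@continuousM R X f g x (cf x) (cg x)). Qed.

Lemma Cfun_scale (a : R) f : Cfun f -> Cfun (fun x => a * f x).
Proof. exact/Cfun_mul/Cfun_cst. Qed.

Lemma Cfun_norm f : Cfun f -> Cfun (fun x => `|f x|).
Proof. by move=> cf x; apply: continuous_comp; [exact: cf | exact: norm_continuous]. Qed.

Lemma Cfun_inv f : (forall x, f x != 0) -> Cfun f -> Cfun (fun x => (f x)^-1).
Proof. move=> f_neq0 cf x; exact: (@continuousV R X f x (f_neq0 x) (cf x)). Qed.

Lemma Cfun_min f g : Cfun f -> Cfun g -> Cfun (fun x => Num.min (f x) (g x)).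
Proof. move=> cf cg x; exact: (@continuous_min R X f g x (cf x) (cg x)). Qed.
End ContinuousFunctions.
Arguments Cfun_cst {R X} c.

Section LinearFunctionals.
Variables (R : realType) (X : topologicalType) (phi : (X -> R) -> R).
Hypothesis phi_lin : lin_on_C phi.
Implicit Types f g : X -> R.

Lemma lin_on_C0 : phi (fun _ => 0) = 0.
Proof.
have := phi_lin 1 (Cfun_cst 0) (Cfun_cst 0).
under [fun _ => _]funext do rewrite mulr0 addr0.
by rewrite mul1r => h; apply: (addrI (phi (fun _ => 0))); rewrite addr0 -h.
Qed.

Lemma lin_on_CZ a f : Cfun f -> phi (fun x => a * f x) = a * phi f.
Proof.
move=> cf; have := phi_lin a cf (Cfun_cst 0).
by under [fun _ => _]funext do rewrite addr0; rewrite lin_on_C0 addr0.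
Qed.

Lemma lin_on_CD f g : Cfun f -> Cfun g -> phi (fun x => f x + g x) = phi f + phi g.
Proof.
move=> cf cg; have := phi_lin 1 cf cg.
by under [fun _ => _]funext do rewrite mul1r; rewrite mul1r.
Qed.

Lemma lin_on_CB f g : Cfun f -> Cfun g -> phi (fun x => f x - g x) = phi f - phi g.
Proof.
move=> cf cg; have := phi_lin (-1) cg cf.
by under [fun _ => _]funext do rewrite mulN1r addrC; rewrite mulN1r addrC.
Qed.

Lemma lin_on_C_cst (c : R) : phi (fun _ => c) = c * phi (fun _ => 1).
Proof.
rewrite -(lin_on_CZ c (Cfun_cst 1)).
by under [fun _ => c * _]funext do rewrite mulr1.
Qed.
End LinearFunctionals.

Section Supnorm.
Variables (R : realType) (X : topologicalType).
Implicit Types f : X -> R.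

Lemma supnorm_empty f : ~ (exists x : X, True) -> supnorm f = 0.
Proof.
move=> X0; rewrite /supnorm; suff -> : [set `|f x| | x in [set: X]] = set0 by rewrite sup0.
by apply/seteqP; split => // y [x _ _]; apply: X0; exists x.
Qed.

Lemma supnorm_le f c : 0 <= c -> (forall x, `|f x| <= c) -> supnorm f <= c.
Proof.
move=> c_ge0 f_le; have [[x _]|X0] := pselect (exists x : X, True); last by rewrite supnorm_empty.
by apply: ge_sup => [|_ [y _ <-]]; [exists `|f x|, x | exact: f_le].
Qed.

Lemma supnorm_ge0 f : 0 <= supnorm f.
Proof.
have [[x _]|X0] := pselect (exists x : X, True); last by rewrite supnorm_empty.
have [f_sup|f_nosup] := pselect (has_sup [set `|f x| | x in [set: X]]).
  by apply: le_trans (normr_ge0 (f x)) _; apply: sup_upper_bound => //; exists x.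
by rewrite /supnorm sup_out.
Qed.

Lemma supnorm_cst1 : supnorm (fun _ : X => 1 : R) <= 1.
Proof. by apply: supnorm_le => // x; rewrite normr1. Qed.

Lemma supnorm_cst0 : supnorm (fun _ : X => 0 : R) <= 1.
Proof. by apply: supnorm_le => // x; rewrite normr0. Qed.

Hypothesis hX : compact [set: X].

Lemma Cfun_bounded f : Cfun f -> exists M : R, forall x, `|f x| <= M.
Proof.
move=> cf; have : compact (f @` [set: X]).
  by apply: continuous_compact => //; apply: continuous_subspaceT.
move=> /compact_bounded [M [_ HM]].
by exists (M + 1) => x; apply: (HM (M + 1)); [rewrite ltrDl | exists x].
Qed.

Lemma ler_supnorm f x : Cfun f -> `|f x| <= supnorm f.
Proof.
move=> cf; apply: sup_upper_bound; last by exists x.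
split; first by exists `|f x|, x.
by have [M HM] := Cfun_bounded cf; exists M => _ [y _ <-].
Qed.
End Supnorm.

Section DualNorm.
Variables (R : realType) (X : topologicalType).
Implicit Types (f g : X -> R) (phi psi : (X -> R) -> R).

Lemma dualnorm_has_sup phi : dual_elt phi ->
  has_sup [set `|phi f| | f in [set f | Cfun f /\ supnorm f <= 1]].
Proof.
move=> [_ [c phi_le]]; split.
  by exists `|phi (fun _ => 0)|, (fun _ => 0); split; [exact: Cfun_cst | exact: supnorm_cst0].
exists `|c| => _ [f [cf f_le1] <-]; apply: le_trans (phi_le f cf) _.
apply: le_trans (ler_norm _) _; rewrite normrM (ger0_norm (supnorm_ge0 f)).
by rewrite -[leRHS]mulr1 ler_wpM2l.
Qed.

Lemma ler_dualnorm phi f : dual_elt phi -> Cfun f -> supnorm f <= 1 ->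
  `|phi f| <= dualnorm phi.
Proof. by move=> dphi cf f_le1; apply: sup_upper_bound; [exact: dualnorm_has_sup | exists f]. Qed.

Lemma dualnorm_ge0 phi : dual_elt phi -> 0 <= dualnorm phi.
Proof. by move=> dphi; apply: le_trans (ler_dualnorm dphi (Cfun_cst 0) (supnorm_cst0 _ _)). Qed.

Lemma dualnorm_le phi c :
  (forall f, Cfun f -> supnorm f <= 1 -> `|phi f| <= c) -> dualnorm phi <= c.
Proof.
move=> phi_le; apply: ge_sup => [|_ [f [cf f_le1] <-]]; last exact: phi_le.
by exists `|phi (fun _ => 0)|, (fun _ => 0); split; [exact: Cfun_cst | exact: supnorm_cst0].
Qed.

Lemma dualnorm_approx phi e : dual_elt phi -> 0 < e ->
  exists f, [/\ Cfun f, supnorm f <= 1 & dualnorm phi - e < `|phi f|].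
Proof.
move=> dphi e_gt0.
by have [_ [f [cf f_le1] <-] ?] := sup_adherent e_gt0 (dualnorm_has_sup dphi); exists f.
Qed.

Lemma dualnorm_add phi psi : dual_elt phi -> dual_elt psi ->
  dualnorm (fun f => phi f + psi f) <= dualnorm phi + dualnorm psi.
Proof.
move=> dphi dpsi; apply: dualnorm_le => f cf f_le1.
by apply: le_trans (ler_normD _ _) _; apply: lerD; exact: ler_dualnorm.
Qed.

Hypothesis hX : compact [set: X].

Lemma ler_dualnorm_supnorm phi f : dual_elt phi -> Cfun f ->
  `|phi f| <= dualnorm phi * supnorm f.
Proof.
move=> dphi cf; have [f0|f_neq0] := eqVneq (supnorm f) 0.
  have -> : f = (fun _ => 0).
    apply/funext => x; apply/normr0_eq0/le_anti.
    by rewrite normr_ge0 andbT -f0 ler_supnorm.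
  by rewrite (lin_on_C0 dphi.1) normr0 mulr_ge0 ?dualnorm_ge0 ?supnorm_ge0.
have f_gt0 : 0 < supnorm f by rewrite lt_def f_neq0 supnorm_ge0.
rewrite mulrC -ler_pdivrMl // -[X in X * _]ger0_norm ?invr_ge0 ?supnorm_ge0 //.
rewrite -normrM -(lin_on_CZ dphi.1 _ cf); apply: ler_dualnorm => //; first exact: Cfun_scale.
apply: supnorm_le => // x; rewrite normrM ger0_norm ?invr_ge0 ?supnorm_ge0 //.
by rewrite ler_pdivrMl // mulr1 ler_supnorm.
Qed.

Lemma dual_elt_add phi psi : dual_elt phi -> dual_elt psi -> dual_elt (fun f => phi f + psi f).
Proof.
move=> dphi dpsi; split=> [a f g cf cg|].
  by rewrite dphi.1 // dpsi.1 // mulrDr addrACA.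
exists (dualnorm phi + dualnorm psi) => f cf; rewrite mulrDl.
by apply: le_trans (ler_normD _ _) _; apply: lerD; exact: ler_dualnorm_supnorm.
Qed.

Lemma dirac_dual s : dual_elt (@dirac_fun R X s).
Proof. by split=> //; exists 1 => f cf; rewrite mul1r ler_supnorm. Qed.

Lemma dualnorm_dirac s : dualnorm (@dirac_fun R X s) = 1.
Proof.
apply/le_anti/andP; split.
  by apply: dualnorm_le => f cf; apply: le_trans; exact: ler_supnorm.
by have := ler_dualnorm (dirac_dual s) (Cfun_cst 1) (supnorm_cst1 _ _); rewrite /dirac_fun normr1.
Qed.
End DualNorm.
Arguments dirac_dual {R X} hX s.

Lemma unit_interval_norm (R : realDomainType) (t : R) : 0 <= t <= 1 -> `|t| <= 1.
Proof. by case/andP=> t_ge0 t_le1; rewrite ger0_norm. Qed.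

Lemma unit_interval_compl (R : realDomainType) (t : R) : 0 <= t <= 1 -> 0 <= 1 - t <= 1.
Proof. by case/andP=> t_ge0 t_le1; rewrite subr_ge0 t_le1 lerBlDr lerDl. Qed.

Definition mul_functional (R : realType) (X : Type) (h : X -> R)
    (phi : (X -> R) -> R) : (X -> R) -> R :=
  fun f => phi (fun x => h x * f x).

Section MulFunctional.
Variables (R : realType) (X : topologicalType).
Hypothesis hX : compact [set: X].
Implicit Types (f g h : X -> R) (phi : (X -> R) -> R).

Lemma dual_elt_mul phi h : dual_elt phi -> Cfun h -> (forall x, `|h x| <= 1) ->
  dual_elt (mul_functional h phi).
Proof.
move=> dphi ch h_le1; split=> [a f g cf cg|].
  rewrite /mul_functional -dphi.1; try exact: Cfun_mul.
  by congr phi; apply/funext => x; rewrite mulrDr mulrCA.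
exists (dualnorm phi) => f cf; rewrite /mul_functional.
apply: le_trans (ler_dualnorm_supnorm hX dphi (Cfun_mul ch cf)) _.
rewrite ler_wpM2l ?dualnorm_ge0 //; apply: supnorm_le => [|x]; first exact: supnorm_ge0.
by rewrite normrM -[leRHS]mul1r; apply: ler_pM => //; exact: ler_supnorm.
Qed.

Lemma dualnorm_mul_split phi h : dual_elt phi -> Cfun h -> (forall x, 0 <= h x <= 1) ->
  dualnorm (mul_functional h phi) + dualnorm (mul_functional (fun x => 1 - h x) phi)
    <= dualnorm phi.
Proof.
move=> dphi ch h01; have ch' : Cfun (fun x => 1 - h x) := Cfun_sub (Cfun_cst 1) ch.
have h'01 x := unit_interval_compl (h01 x).
have d1 := dual_elt_mul dphi ch (fun x => unit_interval_norm (h01 x)).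
have d2 := dual_elt_mul dphi ch' (fun x => unit_interval_norm (h'01 x)).
apply/ler_addgt0Pr => e e_gt0; have e2_gt0 : 0 < e / 2 by rewrite divr_gt0.
have [f1 [cf1 f1_le1 f1_approx]] := dualnorm_approx d1 e2_gt0.
have [f2 [cf2 f2_le1 f2_approx]] := dualnorm_approx d2 e2_gt0.
set a1 := mul_functional h phi f1 in f1_approx.
set a2 := mul_functional (fun x => 1 - h x) phi f2 in f2_approx.
(* F nearly norms both pieces at once, and |F| <= h + (1 - h) = 1. *)
pose F x := h x * (Num.sg a1 * f1 x) + (1 - h x) * (Num.sg a2 * f2 x).
have cF : Cfun F by apply: Cfun_add; apply: Cfun_mul => //; exact: Cfun_scale.
have sg_le1 a f x : Cfun f -> supnorm f <= 1 -> `|Num.sg a * f x| <= 1.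
  move=> cf f_le1; rewrite normrM normr_sg.
  by case: (a != 0); rewrite ?mul0r ?mul1r // (le_trans (ler_supnorm hX _ cf)).
have F_le1 : supnorm F <= 1.
  apply: supnorm_le => // x; apply: le_trans (ler_normD _ _) _.
  have /andP[hx_ge0 _] := h01 x; have /andP[h'x_ge0 _] := h'01 x.
  rewrite (normrM (h x)) (normrM (1 - h x)) (ger0_norm hx_ge0) (ger0_norm h'x_ge0).
  have := sg_le1 a1 f1 x cf1 f1_le1; have := sg_le1 a2 f2 x cf2 f2_le1; nra.
have phiF : phi F = `|a1| + `|a2|.
  rewrite /F (lin_on_CD dphi.1); try by apply: Cfun_mul => //; exact: Cfun_scale.
  rewrite !normrEsg /a1 /a2 /mul_functional.
  rewrite -(lin_on_CZ dphi.1 _ (Cfun_mul ch cf1)) -(lin_on_CZ dphi.1 _ (Cfun_mul ch' cf2)).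
  by congr (phi _ + phi _); apply/funext => x; rewrite mulrCA.
have := ler_dualnorm dphi cF F_le1; rewrite phiF ger0_norm ?addr_ge0 //; lra.
Qed.
End MulFunctional.

Lemma le_mul_eps_eq0 (R : realFieldType) (c v : R) :
  0 <= c -> (forall e, 0 < e -> `|v| <= c * e) -> v = 0.
Proof.
move=> c_ge0 v_le; apply/normr0_eq0/le_anti; rewrite normr_ge0 andbT.
apply/ler_addgt0Pr => e e_gt0; rewrite add0r.
have c1_gt0 : 0 < c + 1 by rewrite ltr_wpDl.
apply: le_trans (v_le _ (divr_gt0 e_gt0 c1_gt0)) _.
by rewrite mulrA ler_pdivrMr // mulrDr mulr1 mulrC lerDl ltW.
Qed.

Lemma Cfun_cutoff (R : realType) (X : topologicalType) (g : X -> R) e :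
  Cfun g -> 0 < e -> exists2 ph : X -> R, Cfun ph &
    [/\ forall x, 0 <= ph x <= 1, forall x, g x = 0 -> ph x = 1
      & forall x, `|ph x * g x| <= e].
Proof.
move=> cg e_gt0; exists (fun x => 1 - Num.min 1 (`|g x| / e)).
  apply/Cfun_sub/Cfun_min; [exact: Cfun_cst | exact: Cfun_cst |].
  by apply: Cfun_mul; [exact: Cfun_norm | exact: Cfun_cst].
have min01 x : 0 <= Num.min 1 (`|g x| / e) <= 1.
  by apply/andP; split; [rewrite le_min ler01 divr_ge0 // ltW | rewrite ge_min lexx].
split=> [x|x gx0|x]; first exact: unit_interval_compl.
  by rewrite gx0 normr0 mul0r (@min_r _ _ 1 0) ?ler01 // subr0.
have [e_le|lt_e] := leP e `|g x|.
  by rewrite min_l ?ler_pdivlMr // ?mul1r // subrr mul0r normr0 ltW.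
rewrite normrM -[leRHS]mul1r; apply: ler_pM => //; last exact: ltW.
exact/unit_interval_norm/unit_interval_compl.
Qed.

Section DiracExtremePoint.
Variables (R : realType) (X : topologicalType).
Hypothesis hX : compact [set: X].
Variables (y1 y2 : (X -> R) -> R) (s : X).
Hypotheses (y1_dual : dual_elt y1) (y2_dual : dual_elt y2).
Hypothesis y12_dirac : forall g, Cfun g -> y1 g + y2 g = g s.
Hypothesis y12_norm : dualnorm y1 + dualnorm y2 <= 1.

Lemma dirac_summand_vanish g : Cfun g -> g s = 0 -> y1 g = 0.
Proof.
move=> cg gs0; apply: (le_mul_eps_eq0 (dualnorm_ge0 y1_dual)) => e e_gt0.
have [ph cph [ph01 ph_s phg_le]] := Cfun_cutoff cg e_gt0.
have cph' : Cfun (fun x => 1 - ph x) := Cfun_sub (Cfun_cst 1) cph.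
have ph'01 x := unit_interval_compl (ph01 x).
have ph_le1 x := unit_interval_norm (ph01 x).
have ph'_le1 x := unit_interval_norm (ph'01 x).
have d1 := dual_elt_mul hX y1_dual cph ph_le1.
have d2 := dual_elt_mul hX y2_dual cph ph_le1.
have d1' := dual_elt_mul hX y1_dual cph' ph'_le1.
have d2' := dual_elt_mul hX y2_dual cph' ph'_le1.
(* ph is 1 at s, so the ph-parts of y1 and y2 carry the whole mass 1 and the
   (1 - ph)-part of y1 has norm 0, while |ph g| <= e. *)
have ph_mass : 1 <= dualnorm (mul_functional ph y1) + dualnorm (mul_functional ph y2).
  have := lerD (ler_dualnorm d1 (Cfun_cst 1) (supnorm_cst1 _ _))
               (ler_dualnorm d2 (Cfun_cst 1) (supnorm_cst1 _ _)).
  apply: le_trans; apply: le_trans (ler_normD _ _).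
  by rewrite /mul_functional y12_dirac ?mulr1 ?ph_s ?normr1 //; exact: Cfun_mul (Cfun_cst 1).
have rest0 : dualnorm (mul_functional (fun x => 1 - ph x) y1) <= 0.
  have := dualnorm_mul_split hX y1_dual cph ph01.
  have := dualnorm_mul_split hX y2_dual cph ph01.
  have := dualnorm_ge0 d2'; move: ph_mass y12_norm; lra.
have -> : y1 g = mul_functional ph y1 g + mul_functional (fun x => 1 - ph x) y1 g.
  rewrite /mul_functional -(lin_on_CD y1_dual.1); try exact: Cfun_mul.
  by congr y1; apply/funext => x; ring.
apply: le_trans (ler_normD _ _) _; rewrite -[leRHS]addr0; apply: lerD.
  apply: le_trans (ler_dualnorm_supnorm hX y1_dual (Cfun_mul cph cg)) _.
  by rewrite ler_wpM2l ?dualnorm_ge0 // supnorm_le // ltW.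
apply: le_trans (ler_dualnorm_supnorm hX d1' cg) _.
by rewrite mulr_le0_ge0 ?supnorm_ge0.
Qed.

Lemma dirac_summandE g : Cfun g -> y1 g = y1 (fun _ => 1) * g s.
Proof.
move=> cg; apply/eqP; rewrite -subr_eq0 mulrC -(lin_on_C_cst y1_dual.1).
rewrite -(lin_on_CB y1_dual.1 cg (Cfun_cst _)); apply/eqP/dirac_summand_vanish.
  exact: Cfun_sub (Cfun_cst _).
by rewrite subrr.
Qed.
End DiracExtremePoint.

Section Characters.
Variables (R : realType) (K : topologicalType) (psi : (K -> R) -> R).
Hypothesis psi_lin : lin_on_C psi.
Hypothesis psi1 : psi (fun _ => 1) = 1.
Hypothesis psiM :
  forall f g, Cfun f -> Cfun g -> psi (fun x => f x * g x) = psi f * psi g.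
Implicit Types f g h u : K -> R.

Lemma character_cst (c : R) : psi (fun _ => c) = c.
Proof. by rewrite (lin_on_C_cst psi_lin) psi1 mulr1. Qed.

Lemma character_kernel_root u : Cfun u -> psi u = 0 -> exists x, u x = 0.
Proof.
move=> cu psi_u; apply/not_existsP => u_neq0.
have u_neq0' x : u x != 0 by apply/eqP; exact: u_neq0.
have := psiM cu (Cfun_inv u_neq0' cu); rewrite psi_u mul0r.
have -> : (fun x => u x * (u x)^-1) = (fun _ => 1) by apply/funext => x; rewrite mulfV.
by rewrite psi1 => /eqP; rewrite oner_eq0.
Qed.

Lemma character_level_set h : Cfun h -> exists x, h x = psi h.
Proof.
move=> ch; have cdev : Cfun (fun x => h x - psi h) := Cfun_sub ch (Cfun_cst _).
have psi_dev : psi (fun x => h x - psi h) = 0.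
  by rewrite (lin_on_CB psi_lin ch (Cfun_cst _)) character_cst subrr.
have [x /eqP] := character_kernel_root cdev psi_dev.
by rewrite subr_eq0 => /eqP hx; exists x.
Qed.

Lemma character_level_sets_directed i j : Cfun i -> Cfun j ->
  exists2 k, Cfun k & forall x, k x = psi k -> i x = psi i /\ j x = psi j.
Proof.
move=> ci cj; pose sqdev h x := (h x - psi h) ^+ 2.
have c_sqdev h : Cfun h -> Cfun (sqdev h).
  by move=> ch; apply: Cfun_mul; exact: Cfun_sub (Cfun_cst _).
have psi_sqdev h : Cfun h -> psi (sqdev h) = 0.
  move=> ch; rewrite /sqdev psiM; try exact: Cfun_sub (Cfun_cst _).
  by rewrite (lin_on_CB psi_lin ch (Cfun_cst _)) character_cst subrr mul0r.
exists (fun x => sqdev i x + sqdev j x); first exact: Cfun_add (c_sqdev i ci) (c_sqdev j cj).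
move=> x; rewrite (lin_on_CD psi_lin (c_sqdev i ci) (c_sqdev j cj)) !psi_sqdev // addr0 => /eqP.
rewrite paddr_eq0 ?sqr_ge0 // !sqrf_eq0 !subr_eq0.
by case/andP=> /eqP -> /eqP ->.
Qed.

Hypothesis hK : compact [set: K].

Lemma character_is_dirac : exists k, forall f, Cfun f -> psi f = f k.
Proof.
(* The level sets [h = psi h] form a filter base; a cluster point is the point sought. *)
pose F := filter_from (@Cfun R K) (fun h => [set x | h x = psi h]).
have F_proper : ProperFilter F.
  apply: filter_from_proper => [|h ch]; last first.
    by have [x hx] := character_level_set ch; exists x.
  apply: filter_from_filter; first by exists (fun _ => 0); exact: Cfun_cst.
  move=> i j ci cj; have [k ck k_sub] := character_level_sets_directed ci cj.
  by exists k => // x /k_sub.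
have [k [_ k_cluster]] := hK F_proper filterT.
exists k => h ch; apply: contrapT => hk_neq.
have k_nbhs : nbhs k [set x | h x != psi h].
  apply: (ch k [set r | r != psi h]); apply: open_nbhs_nbhs; split.
    exact: open_neq.
  by apply/eqP => /esym.
have F_level : F [set x | h x = psi h] by exists h.
have [x [/= -> ]] := k_cluster _ _ F_level k_nbhs.
by rewrite /= eqxx.
Qed.
End Characters.

Lemma Cfun_affine_unit_interval (R : realType) (X : topologicalType) (h : X -> R) :
  compact [set: X] -> Cfun h -> exists a b (h' : X -> R),
    [/\ Cfun h', forall x, 0 <= h' x <= 1 & h = fun x => a * h' x + b].
Proof.
move=> hX ch; pose M := supnorm h + 1.
have M_gt0 : 0 < M by rewrite ltr_wpDl // supnorm_ge0.
have M2_gt0 : 0 < 2 * M by rewrite mulr_gt0.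
exists (2 * M), (- M), (fun x => (h x + M) / (2 * M)); split.
- exact: Cfun_mul (Cfun_add ch (Cfun_cst _)) (Cfun_cst _).
- move=> x; have : `|h x| <= M by rewrite ler_wpDr // ler_supnorm.
  rewrite ler_norml => /andP[M_le_hx hx_le_M].
  apply/andP; split; last by rewrite ler_pdivrMr // mul1r; lra.
  by apply: divr_ge0; [lra | exact: ltW].
- by apply/funext => x; field; rewrite lt0r_neq0.
Qed.

Section UEmbedding.
Variables (R : realType) (K S : topologicalType).
Hypotheses (hK : compact [set: K]) (hS : compact [set: S]).
Variable T : (K -> R) -> (S -> R).
Hypothesis hT : U_embedding T.
Implicit Types f g h : K -> R.

Let T_Cfun : forall f, Cfun f -> Cfun (T f) := hT.1.1.
Let T_isometry : forall f, Cfun f -> supnorm (T f) = supnorm f := hT.1.2.2.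

Lemma F_TE s f : F_T T s f = T f s.
Proof. by []. Qed.

Lemma F_T_lin s : lin_on_C (F_T T s).
Proof. by move=> a f g cf cg; rewrite !F_TE hT.1.2.1. Qed.

Lemma F_T_le_supnorm s f : Cfun f -> `|F_T T s f| <= supnorm f.
Proof. by move=> cf; rewrite F_TE -T_isometry //; exact/ler_supnorm/T_Cfun. Qed.

Lemma F_T_dual s : dual_elt (F_T T s).
Proof.
split; first exact: F_T_lin.
by exists 1 => f cf; rewrite mul1r F_T_le_supnorm.
Qed.

Section NormOnePoint.
Variable s : S.
Hypothesis T1_s : `|T (fun _ => 1) s| = 1.

Lemma dualnorm_F_T : dualnorm (F_T T s) = 1.
Proof.
apply/le_anti/andP; split.
  by apply: dualnorm_le => f cf; apply: le_trans; exact: F_T_le_supnorm.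
by have := ler_dualnorm (F_T_dual s) (Cfun_cst 1) (supnorm_cst1 _ _); rewrite F_TE T1_s.
Qed.

Lemma F_T_extension_dirac y : dual_elt y -> eq_on_C (adjoint T y) (F_T T s) ->
  dualnorm y = 1 -> eq_on_C y (@dirac_fun R S s).
Proof.
move=> dy y_ext y_norm g cg; rewrite -dualnorm_F_T in y_norm.
have [y0 [_ _ _ y0_unique]] := hT.2 _ (F_T_dual s).
rewrite (y0_unique y dy y_ext y_norm g cg).
have dirac_ext : eq_on_C (adjoint T (@dirac_fun R S s)) (F_T T s) by [].
have dirac_norm : dualnorm (@dirac_fun R S s) = dualnorm (F_T T s).
  by rewrite dualnorm_F_T dualnorm_dirac.
by rewrite (y0_unique _ (dirac_dual hS s) dirac_ext dirac_norm g cg).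
Qed.

Lemma F_T_mul_unit_interval h : Cfun h -> (forall x, 0 <= h x <= 1) ->
  exists c, forall f, Cfun f -> F_T T s (fun x => h x * f x) = c * F_T T s f.
Proof.
move=> ch h01; have ch' : Cfun (fun x => 1 - h x) := Cfun_sub (Cfun_cst 1) ch.
have [y1 [d1 y1_ext y1_norm _]] :=
  hT.2 _ (dual_elt_mul hK (F_T_dual s) ch (fun x => unit_interval_norm (h01 x))).
have [y2 [d2 y2_ext y2_norm _]] := hT.2 _ (dual_elt_mul hK (F_T_dual s) ch'
  (fun x => unit_interval_norm (unit_interval_compl (h01 x)))).
have d12 := dual_elt_add hS d1 d2.
have y12_norm : dualnorm y1 + dualnorm y2 <= 1.
  by rewrite y1_norm y2_norm -[leRHS]dualnorm_F_T; exact: (dualnorm_mul_split hK (F_T_dual s) ch h01).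
have y12_ext : eq_on_C (adjoint T (fun v => y1 v + y2 v)) (F_T T s).
  move=> f cf; have := y1_ext f cf; have := y2_ext f cf.
  rewrite /adjoint /mul_functional => -> ->.
  rewrite -(lin_on_CD (F_T_lin s)); try exact: Cfun_mul.
  by congr (F_T T s); apply/funext => x; ring.
have y12_norm1 : dualnorm (fun v => y1 v + y2 v) = 1.
  apply/le_anti/andP; split; first exact: le_trans (dualnorm_add d1 d2) y12_norm.
  have T1_le1 : supnorm (T (fun _ => 1)) <= 1.
    by rewrite T_isometry ?supnorm_cst1 //; exact: Cfun_cst.
  have := ler_dualnorm d12 (T_Cfun (Cfun_cst 1)) T1_le1.
  by have := y12_ext _ (Cfun_cst 1); rewrite /adjoint => ->; rewrite F_TE T1_s.
have y12_dirac := F_T_extension_dirac d12 y12_ext y12_norm1.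
exists (y1 (fun _ => 1)) => f cf.
by rewrite -[LHS](y1_ext f cf) /adjoint (dirac_summandE hS d1 d2 y12_dirac y12_norm (T_Cfun cf)).
Qed.

Lemma F_T_mul h f : Cfun h -> Cfun f ->
  F_T T s (fun x => h x * f x) * F_T T s (fun _ => 1) = F_T T s h * F_T T s f.
Proof.
move=> ch cf; have [a [b [h' [ch' h'01 ->]]]] := Cfun_affine_unit_interval hK ch.
have [c h'_mul] := F_T_mul_unit_interval ch' h'01.
have Fh' : F_T T s h' = c * F_T T s (fun _ => 1).
  rewrite -h'_mul; last exact: Cfun_cst.
  by congr (F_T T s); apply/funext => x; rewrite mulr1.
have -> : (fun x => (a * h' x + b) * f x) = (fun x => a * (h' x * f x) + b * f x).
  by apply/funext => x; ring.
rewrite (F_T_lin s a (Cfun_mul ch' cf) (Cfun_scale cf)) (lin_on_CZ (F_T_lin s) b cf).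
rewrite (h'_mul f cf) (F_T_lin s a ch' (Cfun_cst b)) (lin_on_C_cst (F_T_lin s) b) Fh'; ring.
Qed.

Lemma F_T_dirac : exists k, forall f, Cfun f -> T f s = T (fun _ => 1) s * f k.
Proof.
set u := T (fun _ => 1) s.
have u2 : u * u = 1 by rewrite -expr2 -real_normK ?num_real // T1_s expr1n.
pose psi f := u * F_T T s f.
have psi_lin : lin_on_C psi by move=> a f g cf cg; rewrite /psi (F_T_lin s) //; ring.
have psiM f g : Cfun f -> Cfun g -> psi (fun x => f x * g x) = psi f * psi g.
  move=> cf cg; have := F_T_mul cf cg; rewrite [F_T T s (fun _ => 1)]F_TE -/u => Fmul.
  by rewrite /psi mulrACA u2 mul1r -Fmul mulrC.
have [k psi_k] := character_is_dirac psi_lin u2 psiM hK.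
by exists k => f cf; rewrite -psi_k // /psi mulrA u2 mul1r.
Qed.
End NormOnePoint.

Lemma A0E : A0 T = [set s | `|T (fun _ => 1) s| = 1].
Proof.
apply/seteqP; split => s /=.
  by case=> k [] /(_ _ (Cfun_cst 1)); rewrite F_TE => ->; rewrite ?normrN normr1.
move=> T1_s; have [k T_k] := F_T_dirac T1_s; exists k.
have [u_ge0|u_lt0] := leP 0 (T (fun _ => 1) s).
  by left => f cf; rewrite F_TE T_k // -(ger0_norm u_ge0) T1_s mul1r.
by right => f cf; rewrite F_TE T_k // -[T _ s]opprK -(ltr0_norm u_lt0) T1_s mulN1r.
Qed.
End UEmbedding.

Lemma zero_set_G_delta (R : realType) (S : topologicalType) (A : set S) :
  zero_set R A -> G_delta A.
Proof.
move=> [g [cg ->]]; exists (fun n => [set s | `|g s| < n.+1%:R^-1]); split=> [n|].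
  apply: (@open_comp _ _ (fun s => `|g s|) [set r | r < n.+1%:R^-1]); last exact: open_lt.
  by move=> s _; exact: Cfun_norm.
apply/seteqP; split=> s /=; first by move=> gs0 n _; rewrite /= gs0 normr0 invr_gt0 ltr0n.
move=> gs_small.
apply/normr0_eq0/le_anti; rewrite normr_ge0 andbT.
apply/ler_addgt0Pr => e e_gt0; rewrite add0r.
have [n n_lt_e] : exists n, n.+1%:R^-1 < e.
  exists (Num.truncn e^-1).
  by rewrite -ltf_pV2 ?(posrE, invr_gt0) // invrK truncnS_gt.
exact/ltW/(lt_trans (gs_small n I)).
Qed.

Unset Implicit Arguments.

Theorem corollary6p21 (R : realType) (K S : topologicalType)
  (hK : compact [set: K]) (hKh : hausdorff_space K)
  (hS : compact [set: S]) (hSh : hausdorff_space S)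
  (T : (K -> R) -> (S -> R)) (hT : U_embedding T) :
  zero_set R (A0 T) /\ G_delta (A0 T).
Proof.
suff zA : zero_set R (A0 T) by split; last exact: zero_set_G_delta zA.
exists (fun s => 1 - `|T (fun _ => 1) s|); split.
  exact: Cfun_sub (Cfun_cst 1) (Cfun_norm (hT.1.1 _ (Cfun_cst 1))).
rewrite (A0E hK hS hT); apply/seteqP; split=> s /=.
  by move=> ->; rewrite subrr.
by move/eqP; rewrite subr_eq0 => /eqP.
Qed.
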